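(* Let $S$ be a multiplicatively closed subset of $R$, $I$ an ideal of $R$, and $M$ an $R$-module. (a) If $S^{-1}I\subseteq W_{S^{-1}R}(S^{-1}M)$, then $I\subseteq W_R(M)$. (b) If $Z_R(M)\cap S=\emptyset$, $W_R(M)\cap S=\emptyset$, and $I\subseteq W_R(M)$, then $S^{-1}I\subseteq W_{S^{-1}R}(S^{-1}M)$. (c) If $M$ is Hopfian, $W_R(M)\cap S=\emptyset$, and $I\subseteq W_R(M)$, then $S^{-1}I\subseteq W_{S^{-1}R}(S^{-1}M)$.
   Context: All rings are commutative with identity. For an $R$-module $M$, $W_R(M)=\{r\in R : rM\neq M\}$ and $Z_R(M)=\{r\in R: rm=0 \text{ for some } 0\neq m\in M\}$. $M$ is Hopfian if every surjective endomorphism of $M$ is an isomorphism. *)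

From HB Require Import structures.
From mathcomp Require Import all_boot all_algebra.
From mathcomp Require Import generic_quotient.
From mathcomp Require Import boolp.
From mathcomp Require Import ring.

Set Implicit Arguments.
Unset Strict Implicit.
Unset Printing Implicit Defensive.

Import GRing.Theory.
Local Open Scope ring_scope.
Local Open Scope quotient_scope.

Record mcset (R : comPzRingType) := MCSet {
  mc_mem : pred R;
  mc1 : mc_mem 1;
  mcM : forall x y, mc_mem x -> mc_mem y -> mc_mem (x * y) }.

Definition is_ideal (R : comPzRingType) (I : pred R) : Prop :=
  [/\ I 0, (forall x y, I x -> I y -> I (x + y)) & (forall r x, I x -> I (r * x))].

Definition W_ (R : comPzRingType) (M : lmodType R) (r : R) : Prop :=
  ~ (forall m : M, exists n : M, r *: n = m).

Definition Z_ (R : comPzRingType) (M : lmodType R) (r : R) : Prop :=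
  exists m : M, m <> 0 /\ r *: m = 0.

Definition hopfian (R : comPzRingType) (M : lmodType R) : Prop :=
  forall f : {linear M -> M}, (forall y, exists x, f x = y) -> injective f.

(** ** Localization S^{-1}M of an R-module M, as the quotient of M x S by
    (m,s) ~ (n,t) <-> exists u in S, u (t m - s n) = 0. *)
Definition den (R : comPzRingType) (S : mcset R) := {s : R | mc_mem S s}.

Definition den1 (R : comPzRingType) (S : mcset R) : den S := exist _ 1 (mc1 S).
Definition denM (R : comPzRingType) (S : mcset R) (s t : den S) : den S :=
  exist _ (val s * val t) (mcM (valP s) (valP t)).

Definition locrel (R : comPzRingType) (S : mcset R) (M : lmodType R)
  (x y : M * den S) : bool :=
  `[< exists u : den S, val u *: (val y.2 *: x.1 - val x.2 *: y.1) = 0 >].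

Lemma locrel_equiv (R : comPzRingType) (S : mcset R) (M : lmodType R) :
  equiv_class_of (@locrel R S M).
Proof.
split.
- move=> x; apply/asboolP; exists (den1 S); by rewrite subrr scaler0.
- move=> x y; apply/asboolP/asboolP => -[u Hu]; exists u;
    by rewrite -opprB scalerN Hu oppr0.
- move=> y x z /asboolP [u Hu] /asboolP [v Hv]; apply/asboolP.
  exists (denM (denM u v) y.2) => /=.
  move: Hu Hv; rewrite !scalerBr !scalerA => /eqP; rewrite subr_eq0 => /eqP Hu.
  move=> /eqP; rewrite subr_eq0 => /eqP Hv.
  apply/eqP; rewrite subr_eq0; apply/eqP.
  have E1 : (val u * val v * val y.2 * val z.2) *: x.1 =
            (val v * val z.2) *: ((val u * val y.2) *: x.1).
    by rewrite scalerA; congr (_ *: _); ring.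
  have E2 : (val u * val v * val y.2 * val x.2) *: z.1 =
            (val u * val x.2) *: ((val v * val y.2) *: z.1).
    by rewrite scalerA; congr (_ *: _); ring.
  rewrite E1 E2 Hu -Hv !scalerA; congr (_ *: _); ring.
Qed.

Canonical locrel_equivrel (R : comPzRingType) (S : mcset R) (M : lmodType R) :=
  EquivRelPack (@locrel_equiv R S M).

Definition Loc (R : comPzRingType) (S : mcset R) (M : lmodType R) :=
  {eq_quot (@locrel R S M)}.

Definition frac (R : comPzRingType) (S : mcset R) (M : lmodType R)
  (m : M) (s : den S) : Loc S M := \pi_(Loc S M) (m, s).

Definition LocR (R : comPzRingType) (S : mcset R) := Loc S R^o.

(** the scalar action of S^{-1}R on S^{-1}M : (a/s)(m/t) = (a m)/(s t) *)
Definition locact (R : comPzRingType) (S : mcset R) (M : lmodType R)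
  (r : LocR S) (x : Loc S M) : Loc S M :=
  let: (a, s) := repr r in let: (m, t) := repr x in
  frac ((a : R) *: m) (denM s t).

Definition locW (R : comPzRingType) (S : mcset R) (M : lmodType R)
  (r : LocR S) : Prop :=
  ~ (forall y : Loc S M, exists x : Loc S M, locact r x = y).

Definition locI (R : comPzRingType) (S : mcset R) (I : pred R)
  (r : LocR S) : Prop :=
  exists (a : R) (s : den S), I a /\ r = frac (a : R^o) s.

From Pilot Require Import Defs.
From mathcomp Require Import all_boot all_algebra.
From mathcomp Require Import generic_quotient boolp ring.

(** If a/s acts surjectively on S^{-1}M, then every m ∈ M satisfies
    v m ∈ aM for some v ∈ S.  When every element of S acts bijectively on M
    (which is what Z_R(M) ∩ S = ∅, resp. Hopficity, gives together with
    W_R(M) ∩ S = ∅), this forces aM = M.  Conversely, aM = M clearly makes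
    a/1 act surjectively on S^{-1}M. *)

Set Implicit Arguments.
Unset Strict Implicit.
Unset Printing Implicit Defensive.
Import GRing.Theory.
Local Open Scope ring_scope.
Local Open Scope quotient_scope.

Local Notation frac := Defs.frac.

Section Localization.
Variables (R : comPzRingType) (S : mcset R) (M : lmodType R).

Definition scale_onto (r : R) : Prop := forall m : M, exists n : M, r *: n = m.

Definition locact_onto (r : LocR S) : Prop :=
  forall y : Loc S M, exists x : Loc S M, locact r x = y.

Lemma fracK (N : lmodType R) (x : Loc S N) : x = frac (repr x).1 (repr x).2.
Proof. by rewrite /Defs.frac -surjective_pairing reprK. Qed.

Lemma frac_eqP (N : lmodType R) (m n : N) (s t : den S) :
  frac m s = frac n t <-> exists u : den S, val u *: (val t *: m - val s *: n) = 0.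
Proof.
rewrite /Defs.frac; split.
- by move/eqquotP => /asboolP [u Hu]; exists u.
- by move=> [u Hu]; apply/eqquotP/asboolP; exists u.
Qed.

Lemma locactE (a : R) (s : den S) (m : M) (t : den S) :
  locact (frac (a : R^o) s) (frac m t) = frac (a *: m) (denM s t).
Proof.
rewrite /locact.
case E1: (repr (frac (a : R^o) s)) => [a' s'].
case E2: (repr (frac m t)) => [m' t'].
have /(frac_eqP (N := R^o)) [u Hu] : frac (a : R^o) s = frac a' s'.
  by rewrite [LHS](fracK (N := R^o)) E1.
have /frac_eqP [v Hv] : frac m t = frac m' t' by rewrite [LHS]fracK E2.
symmetry; apply/frac_eqP; exists (denM u v) => /=.
have Hu' : val u * val s' * a = val u * val s * a'.
  apply/eqP; rewrite -subr_eq0; apply/eqP.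
  by rewrite -[RHS](Hu : val u * (val s' * a - val s * (a' : R)) = 0); ring.
have Hv' : (val v * val t') *: m = (val v * val t) *: m'.
  by apply/eqP; rewrite -subr_eq0 -!scalerA -scalerBr Hv.
have E : (val u * val v) *: ((val s' * val t') *: (a *: m)) =
          (val u * val s' * a) *: ((val v * val t') *: m).
  by rewrite !scalerA; congr (_ *: _); ring.
rewrite scalerBr E Hv' Hu' !scalerA.
have mulrACA5 (x1 x2 x3 x4 x5 : R) : x1 * x2 * x3 * (x4 * x5) = x1 * x4 * (x2 * x5 * x3).
  by ring.
by apply/eqP; rewrite subr_eq0; apply/eqP; congr (_ *: _); exact: mulrACA5.
Qed.

Lemma locact_onto_frac1 (a : R) : scale_onto a -> locact_onto (frac (a : R^o) (den1 S)).
Proof.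
move=> onto y; rewrite (fracK y).
have [n Hn] := onto (repr y).1.
exists (frac n (repr y).2); rewrite locactE; apply/frac_eqP.
by exists (den1 S) => /=; rewrite Hn !scale1r mul1r subrr.
Qed.

Lemma locact_onto_scale (a : R) (s : den S) :
  locact_onto (frac (a : R^o) s) ->
  forall m : M, exists (v : den S) (n : M), val v *: m = a *: n.
Proof.
move=> onto m; have [x Hx] := onto (frac m (den1 S)).
rewrite (fracK x) locactE in Hx.
move/frac_eqP: Hx => [u /eqP]; rewrite /= scalerBr !scalerA mul1r subr_eq0 => /eqP Hu.
exists (denM u (denM s (repr x).2)), (val u *: (repr x).1) => /=.
by rewrite -Hu scalerA mulrC.
Qed.

Lemma scale_onto_of_locact_onto (a : R) (s : den S) :
  (forall v : den S, scale_onto (val v) /\ injective (fun m : M => val v *: m)) ->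
  locact_onto (frac (a : R^o) s) -> scale_onto a.
Proof.
move=> bij onto m; have [v [n Hvn]] := locact_onto_scale onto m.
have [onto_v inj] := bij v; have [n' Hn'] := onto_v n.
exists n'; apply: inj => /=.
by rewrite Hvn -Hn' !scalerA mulrC.
Qed.

Lemma locI_sub_locW (I : pred R) :
  (forall v : den S, scale_onto (val v) /\ injective (fun m : M => val v *: m)) ->
  (forall a, I a -> W_ M a) -> forall r : LocR S, locI I r -> locW M r.
Proof.
move=> bij IW _ [a [s [Ia ->]]] onto.
exact: IW a Ia (scale_onto_of_locact_onto bij onto).
Qed.

Lemma scale_onto_den (v : den S) :
  (forall a : R, W_ M a -> ~ mc_mem S a) -> scale_onto (val v).
Proof. by move=> WS; apply: contrapT => notW; exact: WS _ notW (valP v). Qed.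

Lemma scale_inj_notZ (r : R) : ~ Z_ M r -> injective (fun m : M => r *: m).
Proof.
move=> notZ m n /= Hmn; apply/eqP; rewrite -subr_eq0; apply/eqP.
by apply: contrapT => Hne; apply: notZ; exists (m - n); rewrite scalerBr Hmn subrr.
Qed.

Lemma hopfian_scale_inj (r : R) :
  hopfian M -> scale_onto r -> injective (fun m : M => r *: m).
Proof. by move=> hopf onto; exact: hopf (r \*: (@idfun M)) onto. Qed.

End Localization.

Theorem lemma2p9 (R : comPzRingType) (S : mcset R) (I : pred R)
    (M : lmodType R) (HI : is_ideal I) :
  [/\
   (* (a) S^{-1}I ⊆ W_{S^{-1}R}(S^{-1}M)  ->  I ⊆ W_R(M) *)
   ((forall r : LocR S, locI I r -> locW M r) ->
      forall a : R, I a -> W_ M a),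
   (* (b) *)
   ((forall a : R, Z_ M a -> ~ mc_mem S a) ->
    (forall a : R, W_ M a -> ~ mc_mem S a) ->
    (forall a : R, I a -> W_ M a) ->
      forall r : LocR S, locI I r -> locW M r)
  & (* (c) *)
   (hopfian M ->
    (forall a : R, W_ M a -> ~ mc_mem S a) ->
    (forall a : R, I a -> W_ M a) ->
      forall r : LocR S, locI I r -> locW M r)].
Proof.
split.
- move=> IW a Ia onto; apply: (IW (frac (a : R^o) (den1 S))).
    by exists a, (den1 S).
  exact: locact_onto_frac1.
- move=> ZS WS; apply: locI_sub_locW => v; split; first exact: scale_onto_den.
  by apply: scale_inj_notZ => Zv; exact: ZS _ Zv (valP v).
- move=> hopf WS; apply: locI_sub_locW => v.
  have onto := scale_onto_den v WS.
  by split; last exact: hopfian_scale_inj.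
Qed.
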